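(* Let $\Theta=(\theta_1,\theta_2,\theta_3)\in\mathbb{R}^3$ with $1,\theta_1,\theta_2,\theta_3$ linearly independent over $\mathbb{Z}$, and let $(x_l)$, $(\zeta_l)$, $(\mathbf{z}_l)$ be the associated best approximations, their errors and best approximation vectors. Let $\nu<k$ be indices and suppose that all vectors $\mathbf{z}_l$, $\nu\leqslant l\leqslant k$, lie in a certain two-dimensional linear subspace $\pi\subset\mathbb{R}^4$. Let $\Lambda=\pi\cap\mathbb{Z}^4$ be the corresponding two-dimensional lattice with two-dimensional fundamental volume $\det\Lambda$. Then for all $l$ with $\nu\leqslant l\leqslant k-1$, $$ C_1\det\Lambda\leqslant \zeta_l x_{l+1}\leqslant 2\det\Lambda, $$ where $$C_1=\left(2\sqrt{3\left(1+\left(|\theta_1|+\tfrac12\right)^2+\left(|\theta_2|+\tfrac12\right)^2+\left(|\theta_3|+\tfrac12\right)^2\right)}\right)^{-1}.$$ In particular, $\det\Lambda\geqslant \frac12\min(\zeta_\nu x_{\nu+1},\ \zeta_{k-1}x_k)$.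
   Context: For a real number $u$, $\|u\|$ is the distance from $u$ to the nearest integer. For an integer $x$ put $\zeta(x)=\max_{1\leqslant j\leqslant 3}\|\theta_j x\|$. A positive integer $x$ is a best approximation if $\zeta(x)=\min\{\zeta(x'): x'\in\mathbb{Z},\ 0<x'\leqslant x\}$. When $1,\theta_1,\theta_2,\theta_3$ are linearly independent over $\mathbb{Z}$, the best approximations form a sequence $x_1<x_2<\dots$ with $\zeta_1>\zeta_2>\dots$, where $\zeta_\nu=\zeta(x_\nu)$. Choose integers $y_{j,\nu}$ with $\|\theta_j x_\nu\|=|\theta_j x_\nu-y_{j,\nu}|$, and put $\mathbf{z}_\nu=(x_\nu,y_{1,\nu},y_{2,\nu},y_{3,\nu})\in\mathbb{Z}^4$ (the best approximation vectors). *)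

From Stdlib Require Export Reals ZArith.
Open Scope R_scope.

Definition dnint (u : R) : R := Rmin (frac_part u) (1 - frac_part u).

Definition zeta (th1 th2 th3 : R) (x : Z) : R :=
  Rmax (Rmax (dnint (th1 * IZR x)) (dnint (th2 * IZR x))) (dnint (th3 * IZR x)).

Definition is_best (th1 th2 th3 : R) (x : Z) : Prop :=
  (0 < x)%Z /\ forall x' : Z, (0 < x' <= x)%Z -> zeta th1 th2 th3 x <= zeta th1 th2 th3 x'.

(* vectors of R^4 / Z^4 are represented by functions on the indices 0,1,2,3 *)
Definition dot4 (u v : nat -> R) : R := u 0%nat * v 0%nat + u 1%nat * v 1%nat + u 2%nat * v 2%nat + u 3%nat * v 3%nat.

Definition zvec (z : nat -> Z) : nat -> R := fun i => IZR (z i).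

Definition in_span (p1 p2 v : nat -> R) : Prop :=
  exists c d : R, forall i, (i < 4)%nat -> v i = c * p1 i + d * p2 i.

Definition lin_indep2 (p1 p2 : nat -> R) : Prop :=
  forall c d : R, (forall i, (i < 4)%nat -> c * p1 i + d * p2 i = 0) -> c = 0 /\ d = 0.

(* two-dimensional covolume of the lattice with basis a, b (sqrt of Gram determinant) *)
Definition detL (a b : nat -> Z) : R :=
  sqrt (dot4 (zvec a) (zvec a) * dot4 (zvec b) (zvec b) - (dot4 (zvec a) (zvec b))^2).

Definition C1_const (th1 th2 th3 : R) : R :=
  / (2 * sqrt (3 * (1 + (Rabs th1 + /2)^2 + (Rabs th2 + /2)^2 + (Rabs th3 + /2)^2))).

From Stdlib Require Import Reals ZArith Lra Lia Psatz Znumtheory.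
Open Scope R_scope.

(* Let u, v be consecutive best approximation vectors, X0 < X1 their first coordinates
   and z0 > z1 their errors.  The 2x2 minors of (u, v) are X1 e_j(u) - X0 e_j(v); using
   the coordinate where u has error z0 and the vector v - u (whose first coordinate lies
   in (0, X1), so its error is at least z0) one gets X1 z0 <= 2 max_j |minor_j|.
   If the coordinate determinant D of u, v in a basis of the lattice had |D| >= 2, a
   point (P u + Q v) / D with |P|, |Q| <= |D| / 2 would have first coordinate below X1
   and error below z0, which is impossible; so u, v form a basis, their minors are those
   of the lattice and are bounded by det L.  Conversely det L ^ 2 = Gram(u, v)
   <= |u - t v|^2 |v|^2 with t = X0 / X1: the first coordinate of u - t v vanishes, the
   others are at most 2 z0, and |v|^2 <= (1 + sum_j (|th_j| + 1/2)^2) X1^2. *)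

Definition err (th : nat -> R) (z : nat -> Z) (j : nat) : R :=
  th j * IZR (z 0%nat) - IZR (z j).

(* For z = (x, y_1, y_2, y_3), the largest of the |th_j x - y_j|.
   On a best approximation vector it is zeta(x) (lemma [dev_bav]). *)
Definition dev (th : nat -> R) (z : nat -> Z) : R :=
  Rmax (Rmax (Rabs (err th z 1)) (Rabs (err th z 2))) (Rabs (err th z 3)).

Definition Z_independent (th : nat -> R) : Prop :=
  forall a0 a1 a2 a3 : Z,
    IZR a0 + IZR a1 * th 1%nat + IZR a2 * th 2%nat + IZR a3 * th 3%nat = 0 ->
    a0 = 0%Z /\ a1 = 0%Z /\ a2 = 0%Z /\ a3 = 0%Z.

Lemma dev_ge th z j : (1 <= j <= 3)%nat -> Rabs (err th z j) <= dev th z.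
Proof.
  intro Hj; unfold dev.
  destruct j as [|[|[|[|j]]]]; try lia.
  - eapply Rle_trans, Rmax_l; apply Rmax_l.
  - eapply Rle_trans, Rmax_l; apply Rmax_r.
  - apply Rmax_r.
Qed.

Lemma dev_attained th z : exists j, (1 <= j <= 3)%nat /\ dev th z = Rabs (err th z j).
Proof.
  unfold dev, Rmax; repeat destruct Rle_dec;
    first [ exists 1%nat; split; [lia|reflexivity]
          | exists 2%nat; split; [lia|reflexivity]
          | exists 3%nat; split; [lia|reflexivity] ].
Qed.

Lemma dev_nonneg th z : 0 <= dev th z.
Proof. eapply Rle_trans; [apply Rabs_pos | apply (dev_ge th z 1); lia]. Qed.

Lemma dev_lub_lt th z c :
  (forall j, (1 <= j <= 3)%nat -> Rabs (err th z j) < c) -> dev th z < c.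
Proof. intro H; unfold dev; repeat apply Rmax_lub_lt; apply H; lia. Qed.

Lemma err_comb th (u v w : nat -> Z) (D P Q : Z) j :
  (forall i, (i < 4)%nat -> D * w i = P * u i + Q * v i)%Z -> (j < 4)%nat ->
  IZR D * err th w j = IZR P * err th u j + IZR Q * err th v j.
Proof.
  intros H Hj.
  assert (E : forall i, (i < 4)%nat -> IZR D * IZR (w i) = IZR P * IZR (u i) + IZR Q * IZR (v i))
    by (intros i Hi; rewrite <- !mult_IZR, <- plus_IZR; f_equal; auto).
  unfold err.
  transitivity (th j * (IZR D * IZR (w 0%nat)) - IZR D * IZR (w j)); [ring|].
  rewrite !E by lia; ring.
Qed.

Lemma abs_comb_le (a b e f c1 c2 : R) :
  Rabs e <= c1 -> Rabs f <= c2 -> Rabs (a * e + b * f) <= Rabs a * c1 + Rabs b * c2.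
Proof.
  intros He Hf.
  eapply Rle_trans; [apply Rabs_triang|]; rewrite !Rabs_mult.
  apply Rplus_le_compat; apply Rmult_le_compat_l; auto; apply Rabs_pos.
Qed.

Lemma indep_two_terms th (Hind : Z_independent th) i j (c A B : Z) :
  (1 <= i <= 3)%nat -> (1 <= j <= 3)%nat ->
  IZR c + IZR A * th i + IZR B * th j = 0 -> A = 0%Z \/ (A + B = 0)%Z.
Proof.
  intros Hi Hj H.
  destruct i as [|[|[|[|i]]]]; try lia; destruct j as [|[|[|[|j]]]]; try lia;
  [ destruct (Hind c (A + B) 0 0)%Z as (?&?&?&?) | destruct (Hind c A B 0)%Z as (?&?&?&?)
  | destruct (Hind c A 0 B)%Z as (?&?&?&?) | destruct (Hind c B A 0)%Z as (?&?&?&?)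
  | destruct (Hind c 0 (A + B) 0)%Z as (?&?&?&?) | destruct (Hind c 0 A B)%Z as (?&?&?&?)
  | destruct (Hind c B 0 A)%Z as (?&?&?&?) | destruct (Hind c 0 B A)%Z as (?&?&?&?)
  | destruct (Hind c 0 0 (A + B))%Z as (?&?&?&?) ]; try (rewrite ?plus_IZR; lra); lia.
Qed.

(* Equal deviations would give an integral relation between 1, th_i and th_j. *)
Lemma dev_neq th (Hind : Z_independent th) (u v : nat -> Z) :
  (0 < u 0%nat < v 0%nat)%Z -> dev th u <> dev th v.
Proof.
  intros Huv E.
  destruct (dev_attained th u) as [i [Hi Ei]], (dev_attained th v) as [j [Hj Ej]].
  rewrite Ei, Ej in E; unfold err in E.
  destruct (Rsqr_eq _ _ (Rsqr_eq_asb_1 _ _ E)) as [E'|E'].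
  - destruct (indep_two_terms th Hind i j (v j - u i) (u 0%nat) (- v 0%nat)); auto; try lia.
    rewrite minus_IZR, opp_IZR; lra.
  - destruct (indep_two_terms th Hind i j (- v j - u i) (u 0%nat) (v 0%nat)); auto; try lia.
    rewrite minus_IZR, opp_IZR; lra.
Qed.

Definition minor (p q : nat -> R) (i j : nat) : R := p i * q j - p j * q i.

Definition gram (p q : nat -> R) : R := dot4 p p * dot4 q q - dot4 p q ^ 2.

Lemma dot4_diag p : dot4 p p = p 0%nat ^ 2 + p 1%nat ^ 2 + p 2%nat ^ 2 + p 3%nat ^ 2.
Proof. unfold dot4; ring. Qed.

Lemma gram_lagrange p q :
  gram p q = minor p q 0 1 ^ 2 + minor p q 0 2 ^ 2 + minor p q 0 3 ^ 2 +
             minor p q 1 2 ^ 2 + minor p q 1 3 ^ 2 + minor p q 2 3 ^ 2.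
Proof. unfold gram, minor, dot4; ring. Qed.

Lemma minor_le_sqrt_gram p q j :
  (1 <= j <= 3)%nat -> Rabs (minor p q 0 j) <= sqrt (gram p q).
Proof.
  intro Hj. rewrite <- (sqrt_pow2 (Rabs _)) by apply Rabs_pos.
  apply sqrt_le_1_alt. rewrite pow2_abs, gram_lagrange.
  pose proof (pow2_ge_0 (minor p q 0 1)); pose proof (pow2_ge_0 (minor p q 0 2));
  pose proof (pow2_ge_0 (minor p q 0 3)); pose proof (pow2_ge_0 (minor p q 1 2));
  pose proof (pow2_ge_0 (minor p q 1 3)); pose proof (pow2_ge_0 (minor p q 2 3)).
  destruct j as [|[|[|[|j]]]]; try lia; lra.
Qed.

Lemma gram_le_shift p q t :
  gram p q <= dot4 (fun i => p i - t * q i) (fun i => p i - t * q i) * dot4 q q.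
Proof.
  set (r := fun i => p i - t * q i).
  assert (E : gram p q = dot4 r r * dot4 q q - dot4 r q ^ 2) by (unfold gram, dot4, r; ring).
  rewrite E. pose proof (pow2_ge_0 (dot4 r q)). lra.
Qed.

Lemma minor_comb (a b p q : nat -> R) (m1 n1 m2 n2 : R) i j :
  p i = m1 * a i + n1 * b i -> p j = m1 * a j + n1 * b j ->
  q i = m2 * a i + n2 * b i -> q j = m2 * a j + n2 * b j ->
  minor p q i j = (m1 * n2 - m2 * n1) * minor a b i j.
Proof. intros Hpi Hpj Hqi Hqj; unfold minor; rewrite Hpi, Hpj, Hqi, Hqj; ring. Qed.

Lemma gram_comb (a b p q : nat -> R) (m1 n1 m2 n2 : R) :
  (forall i, (i < 4)%nat -> p i = m1 * a i + n1 * b i) ->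
  (forall i, (i < 4)%nat -> q i = m2 * a i + n2 * b i) ->
  gram p q = (m1 * n2 - m2 * n1) ^ 2 * gram a b.
Proof.
  intros Hp Hq; unfold gram, dot4.
  rewrite (Hp 0%nat), (Hp 1%nat), (Hp 2%nat), (Hp 3%nat),
          (Hq 0%nat), (Hq 1%nat), (Hq 2%nat), (Hq 3%nat) by lia.
  ring.
Qed.

Lemma zvec_comb (a b z : nat -> Z) (m n : Z) :
  (forall i, (i < 4)%nat -> z i = m * a i + n * b i)%Z ->
  forall i, (i < 4)%nat -> zvec z i = IZR m * zvec a i + IZR n * zvec b i.
Proof. intros H i Hi; unfold zvec; rewrite H, plus_IZR, !mult_IZR by exact Hi; reflexivity. Qed.

Lemma Z_centered_rem (n d : Z) :
  d <> 0%Z -> exists k r, n = (k * d + r)%Z /\ (2 * Z.abs r <= Z.abs d)%Z.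
Proof.
  intro Hd. pose proof (Z.div_mod n d Hd) as E.
  destruct (Z_lt_le_dec 0 d) as [Hpos|Hneg].
  - pose proof (Z.mod_pos_bound n d Hpos).
    destruct (Z_le_gt_dec (2 * (n mod d)) d).
    + exists (n / d)%Z, (n mod d)%Z. split; lia.
    + exists (n / d + 1)%Z, (n mod d - d)%Z. split; lia.
  - assert (Hd' : (d < 0)%Z) by lia. pose proof (Z.mod_neg_bound n d Hd').
    destruct (Z_le_gt_dec (-2 * (n mod d)) (-d)).
    + exists (n / d)%Z, (n mod d)%Z. split; lia.
    + exists (n / d + 1)%Z, (n mod d - d)%Z. split; lia.
Qed.

Lemma det_not_divides_all (m1 n1 m2 n2 : Z) :
  (2 <= Z.abs (m1 * n2 - m2 * n1))%Z ->
  ~ ((m1 * n2 - m2 * n1 | m1) /\ (m1 * n2 - m2 * n1 | n1) /\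
     (m1 * n2 - m2 * n1 | m2) /\ (m1 * n2 - m2 * n1 | n2)).
Proof.
  set (D := (m1 * n2 - m2 * n1)%Z).
  intros H2 [[k1 E1] [[k2 E2] [[k3 E3] [k4 E4]]]].
  assert (ED : (D * (D * (k1 * k4 - k3 * k2)) = D * 1)%Z)
    by (unfold D at 3; rewrite E1, E2, E3, E4; ring).
  apply Z.mul_reg_l in ED; [|lia].
  destruct (Z.eq_mul_1 _ _ ED); lia.
Qed.

Definition norm_bound (th : nat -> R) : R :=
  1 + (Rabs (th 1%nat) + / 2) ^ 2 + (Rabs (th 2%nat) + / 2) ^ 2 + (Rabs (th 3%nat) + / 2) ^ 2.

Lemma norm_bound_pos th : 0 < norm_bound th.
Proof.
  unfold norm_bound; pose proof (pow2_ge_0 (Rabs (th 1%nat) + / 2));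
  pose proof (pow2_ge_0 (Rabs (th 2%nat) + / 2)); pose proof (pow2_ge_0 (Rabs (th 3%nat) + / 2)); lra.
Qed.

Lemma dot4_nonneg p : 0 <= dot4 p p.
Proof.
  rewrite dot4_diag; pose proof (pow2_ge_0 (p 0%nat)); pose proof (pow2_ge_0 (p 1%nat));
  pose proof (pow2_ge_0 (p 2%nat)); pose proof (pow2_ge_0 (p 3%nat)); lra.
Qed.

Lemma dot4_le_norm_bound th (z : nat -> Z) :
  (0 < z 0%nat)%Z -> dev th z <= / 2 ->
  dot4 (zvec z) (zvec z) <= norm_bound th * IZR (z 0%nat) ^ 2.
Proof.
  intros Hz0 Hdev; set (X := IZR (z 0%nat)).
  assert (HX : 1 <= X) by (apply IZR_le; lia).
  assert (Hz : forall j, (1 <= j <= 3)%nat -> zvec z j ^ 2 <= ((Rabs (th j) + / 2) * X) ^ 2).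
  { intros j Hj; apply pow_maj_Rabs.
    replace (zvec z j) with (th j * X + (-1) * err th z j) by (unfold err, zvec, X; ring).
    eapply Rle_trans; [apply (abs_comb_le _ _ _ _ X (dev th z)); [rewrite Rabs_pos_eq; lra | apply dev_ge; exact Hj]|].
    rewrite (Rabs_left (-1)) by lra; lra. }
  rewrite dot4_diag; change (zvec z 0%nat) with X.
  pose proof (Hz 1%nat ltac:(lia)); pose proof (Hz 2%nat ltac:(lia)); pose proof (Hz 3%nat ltac:(lia)).
  apply Rle_trans with (X ^ 2 + ((Rabs (th 1%nat) + / 2) * X) ^ 2 +
                        ((Rabs (th 2%nat) + / 2) * X) ^ 2 + ((Rabs (th 3%nat) + / 2) * X) ^ 2);
    [lra | right; unfold norm_bound; ring].
Qed.

(* [u] and [v] play the roles of two consecutive best approximation vectors. *)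
Section ConsecutiveVectors.

Variable th : nat -> R.
Variables u v : nat -> Z.
Hypothesis Hu0 : (0 < u 0%nat)%Z.
Hypothesis Huv : (u 0%nat < v 0%nat)%Z.
Hypothesis Hdev : dev th v < dev th u.
Hypothesis Hhalf : dev th u <= / 2.
Hypothesis Hgap : forall w : nat -> Z, (0 < w 0%nat < v 0%nat)%Z -> dev th u <= dev th w.

Lemma dev_pos : 0 < dev th u.
Proof. pose proof (dev_nonneg th v); lra. Qed.

Lemma dev_mul_le_minor d :
  (forall j, (1 <= j <= 3)%nat -> Rabs (minor (zvec u) (zvec v) 0 j) <= d) ->
  dev th u * IZR (v 0%nat) <= 2 * d.
Proof.
  intro Hd.
  set (X0 := IZR (u 0%nat)); set (X1 := IZR (v 0%nat)).
  assert (HX : 0 < X0 < X1) by (split; apply IZR_lt; lia).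
  assert (Hminor : forall j, minor (zvec u) (zvec v) 0 j = X1 * err th u j - X0 * err th v j)
    by (intro; unfold minor, zvec, err, X0, X1; ring).
  destruct (dev_attained th u) as [i [Hi Ei]].
  assert (A : X1 * dev th u <= d + X0 * dev th v).
  { rewrite Ei, <- (Rabs_pos_eq X1) at 1 by lra; rewrite <- Rabs_mult.
    replace (X1 * err th u i) with (1 * minor (zvec u) (zvec v) 0 i + X0 * err th v i)
      by (rewrite Hminor; ring).
    eapply Rle_trans; [apply abs_comb_le; [apply Hd | apply dev_ge]; exact Hi|].
    rewrite Rabs_R1, (Rabs_pos_eq X0) by lra; lra. }
  set (w := fun i => (v i - u i)%Z).
  destruct (dev_attained th w) as [j [Hj Ej]].
  assert (Ew : err th w j = err th v j - err th u j) by (unfold err, w; rewrite !minus_IZR; ring).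
  assert (Hw : dev th u <= Rabs (err th v j - err th u j))
    by (rewrite <- Ew, <- Ej; apply Hgap; unfold w; lia).
  assert (B : X1 * dev th u <= d + (X1 - X0) * dev th v).
  { apply Rle_trans with (X1 * Rabs (err th v j - err th u j)); [apply Rmult_le_compat_l; lra|].
    rewrite <- (Rabs_pos_eq X1) at 1 by lra; rewrite <- Rabs_mult.
    replace (X1 * (err th v j - err th u j))
      with ((-1) * minor (zvec u) (zvec v) 0 j + (X1 - X0) * err th v j)
      by (rewrite Hminor; ring).
    eapply Rle_trans; [apply abs_comb_le; [apply Hd | apply dev_ge]; exact Hj|].
    rewrite (Rabs_left (-1)), (Rabs_pos_eq (X1 - X0)) by lra; lra. }
  assert (X1 * dev th v <= X1 * dev th u) by (apply Rmult_le_compat_l; lra).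
  lra.
Qed.

Lemma dot4_shift_le :
  let t := IZR (u 0%nat) / IZR (v 0%nat) in
  dot4 (fun i => zvec u i - t * zvec v i) (fun i => zvec u i - t * zvec v i)
  <= 12 * dev th u ^ 2.
Proof.
  intro t; set (r := fun i => zvec u i - t * zvec v i).
  assert (HX : 0 < IZR (u 0%nat) < IZR (v 0%nat)) by (split; apply IZR_lt; lia).
  assert (Ht : 0 <= t <= 1).
  { assert (Htx : t * IZR (v 0%nat) = IZR (u 0%nat)) by (unfold t; field; lra). split; nra. }
  pose proof (dev_nonneg th v).
  assert (Hr : forall j, (1 <= j <= 3)%nat -> r j ^ 2 <= (2 * dev th u) ^ 2).
  { intros j Hj; apply pow_maj_Rabs.
    replace (r j) with ((-1) * err th u j + t * err th v j)
      by (unfold r, err, zvec, t; field; lra).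
    eapply Rle_trans; [apply abs_comb_le; apply dev_ge; exact Hj|].
    rewrite (Rabs_left (-1)), (Rabs_pos_eq t) by lra; nra. }
  assert (Hr0 : r 0%nat = 0) by (unfold r, zvec, t; field; lra).
  rewrite dot4_diag, Hr0.
  pose proof (Hr 1%nat ltac:(lia)); pose proof (Hr 2%nat ltac:(lia)); pose proof (Hr 3%nat ltac:(lia)).
  nra.
Qed.

Lemma sqrt_gram_le :
  C1_const (th 1) (th 2) (th 3) * sqrt (gram (zvec u) (zvec v)) <= dev th u * IZR (v 0%nat).
Proof.
  set (z0 := dev th u); set (X1 := IZR (v 0%nat)); set (S := norm_bound th).
  assert (HX1 : 0 < X1) by (apply IZR_lt; lia).
  assert (HS : 0 < S) by apply norm_bound_pos.
  assert (Hgram : gram (zvec u) (zvec v) <= (2 * sqrt (3 * S) * z0 * X1) ^ 2).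
  { eapply Rle_trans; [apply (gram_le_shift _ _ (IZR (u 0%nat) / X1))|].
    replace ((2 * sqrt (3 * S) * z0 * X1) ^ 2) with ((12 * z0 ^ 2) * (S * X1 ^ 2))
      by (rewrite !Rpow_mult_distr, pow2_sqrt by lra; ring).
    apply Rmult_le_compat; [apply dot4_nonneg | apply dot4_nonneg | apply dot4_shift_le |].
    apply dot4_le_norm_bound; [lia | lra]. }
  apply sqrt_le_1_alt in Hgram.
  rewrite sqrt_pow2 in Hgram
    by (pose proof (sqrt_pos (3 * S)); pose proof dev_pos;
        repeat apply Rmult_le_pos; unfold z0; lra).
  assert (Hsq : 0 < 2 * sqrt (3 * S)) by (pose proof (sqrt_lt_R0 (3 * S)); lra).
  change (C1_const (th 1) (th 2) (th 3)) with (/ (2 * sqrt (3 * S))).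
  apply Rle_trans with (/ (2 * sqrt (3 * S)) * (2 * sqrt (3 * S) * z0 * X1)).
  - apply Rmult_le_compat_l; [apply Rlt_le, Rinv_0_lt_compat|]; lra.
  - right; field; lra.
Qed.

Lemma consecutive_independent (P Q : Z) :
  (P <> 0 \/ Q <> 0)%Z -> (forall i, (i < 4)%nat -> P * u i + Q * v i = 0)%Z -> False.
Proof.
  intros HPQ Hdep.
  destruct (dev_attained th u) as [i [Hi Ei]].
  assert (Ecomb : IZR P * err th u i + IZR Q * err th v i = 0).
  { rewrite <- (err_comb th u v (fun _ => 0%Z) 1 P Q i) by first [lia | intros k Hk; specialize (Hdep k Hk); lia].
    unfold err; ring. }
  assert (Hx : (Z.abs Q < Z.abs P)%Z) by (pose proof (Hdep 0%nat ltac:(lia)); nia).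
  apply IZR_lt in Hx; rewrite <- !Rabs_Zabs in Hx.
  assert (Rabs (IZR P) * dev th u <= Rabs (IZR Q) * dev th v).
  { rewrite Ei, <- !Rabs_mult.
    replace (IZR P * err th u i) with (- (IZR Q * err th v i)) by lra.
    rewrite Rabs_Ropp, Rabs_mult.
    apply Rmult_le_compat_l; [apply Rabs_pos | apply dev_ge; exact Hi]. }
  pose proof (Rabs_pos (IZR Q)); pose proof dev_pos; pose proof (dev_nonneg th v).
  nra.
Qed.

Lemma no_short_combination_nonneg (D P Q : Z) (w : nat -> Z) :
  (2 * Z.abs P <= Z.abs D)%Z -> (2 * Z.abs Q <= Z.abs D)%Z -> (P <> 0 \/ Q <> 0)%Z ->
  (forall i, (i < 4)%nat -> D * w i = P * u i + Q * v i)%Z -> (0 <= w 0%nat)%Z -> False.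
Proof.
  intros HP HQ HPQ Hw Hw0.
  assert (HD : (0 < Z.abs D)%Z) by lia.
  assert (Hsmall : dev th w < dev th u).
  { apply dev_lub_lt; intros j Hj.
    apply (Rmult_lt_reg_l (IZR (Z.abs D))); [apply IZR_lt; exact HD|].
    rewrite <- Rabs_Zabs, <- Rabs_mult, (err_comb th u v w D P Q j Hw) by lia.
    eapply Rle_lt_trans; [apply abs_comb_le; apply dev_ge; [exact Hj|exact Hj]|].
    rewrite !Rabs_Zabs.
    apply IZR_le in HP, HQ; rewrite mult_IZR in HP, HQ.
    pose proof (IZR_le _ _ (Z.abs_nonneg P)); pose proof (IZR_le _ _ (Z.abs_nonneg Q)).
    pose proof dev_pos; pose proof (dev_nonneg th v).
    destruct (Z.eq_dec Q 0) as [->|HQ0].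
    - assert (0 < IZR (Z.abs P)) by (apply IZR_lt; lia). simpl; nra.
    - assert (0 < IZR (Z.abs Q)) by (apply IZR_lt; lia). nra. }
  destruct (Z.eq_dec (w 0%nat) 0) as [Hz|Hnz].
  - apply (consecutive_independent P Q HPQ); intros i Hi.
    rewrite <- Hw by exact Hi.
    destruct i as [|i]; [rewrite Hz; ring|].
    assert (Habs : Rabs (IZR (w (S i))) < 1).
    { pose proof (dev_ge th w (S i) ltac:(lia)).
      unfold err in *; rewrite Hz, Rmult_0_r, Rminus_0_l, Rabs_Ropp in *; lra. }
    rewrite Rabs_Zabs in Habs; apply lt_IZR in Habs.
    replace (w (S i)) with 0%Z by lia; ring.
  - assert (Hlt : (w 0%nat < v 0%nat)%Z) by (pose proof (Hw 0%nat ltac:(lia)); nia).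
    pose proof (Hgap w ltac:(lia)); lra.
Qed.

Lemma no_short_combination (D P Q : Z) (w : nat -> Z) :
  (2 * Z.abs P <= Z.abs D)%Z -> (2 * Z.abs Q <= Z.abs D)%Z -> (P <> 0 \/ Q <> 0)%Z ->
  (forall i, (i < 4)%nat -> D * w i = P * u i + Q * v i)%Z -> False.
Proof.
  intros HP HQ HPQ Hw.
  destruct (Z_le_gt_dec 0 (w 0%nat)).
  - exact (no_short_combination_nonneg D P Q w HP HQ HPQ Hw ltac:(lia)).
  - apply (no_short_combination_nonneg D (- P) (- Q) (fun i => - w i)%Z); try lia.
    intros i Hi; rewrite Z.mul_opp_r, (Hw i Hi); ring.
Qed.

Lemma coords_det_unit (a b : nat -> Z) (m1 n1 m2 n2 : Z) :
  (forall i, (i < 4)%nat -> u i = m1 * a i + n1 * b i)%Z ->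
  (forall i, (i < 4)%nat -> v i = m2 * a i + n2 * b i)%Z ->
  (m1 * n2 - m2 * n1 <> 0)%Z -> Z.abs (m1 * n2 - m2 * n1) = 1%Z.
Proof.
  intros Hu Hv HD; set (D := (m1 * n2 - m2 * n1)%Z) in *.
  assert (Hdiv : forall (c : nat -> Z) (P0 Q0 : Z),
             (forall i, (i < 4)%nat -> D * c i = P0 * u i + Q0 * v i)%Z -> (D | P0) /\ (D | Q0)).
  { intros c P0 Q0 Hc.
    destruct (Z_centered_rem P0 D HD) as [k [P [EP HP]]].
    destruct (Z_centered_rem Q0 D HD) as [k' [Q [EQ HQ]]].
    destruct (Z.eq_dec P 0), (Z.eq_dec Q 0); [split; [exists k | exists k']; lia | ..];
      exfalso; apply (no_short_combination D P Q (fun i => c i - k * u i - k' * v i)%Z HP HQ);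
      solve [lia | intros i Hi; rewrite !Z.mul_sub_distr_l, (Hc i Hi), EP, EQ; ring]. }
  destruct (Hdiv a n2 (- n1)%Z) as [Dn2 Dn1].
  { intros i Hi; rewrite (Hu i Hi), (Hv i Hi); unfold D; ring. }
  destruct (Hdiv b (- m2)%Z m1) as [Dm2 Dm1].
  { intros i Hi; rewrite (Hu i Hi), (Hv i Hi); unfold D; ring. }
  destruct (Z.eq_dec (Z.abs D) 1) as [|Hne]; [assumption|exfalso].
  apply (det_not_divides_all m1 n1 m2 n2); [fold D; lia|].
  repeat split; auto; apply Z.divide_opp_r; assumption.
Qed.

Theorem consecutive_bounds (a b : nat -> Z) (m1 n1 m2 n2 : Z) :
  (forall i, (i < 4)%nat -> u i = m1 * a i + n1 * b i)%Z ->
  (forall i, (i < 4)%nat -> v i = m2 * a i + n2 * b i)%Z ->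
  C1_const (th 1) (th 2) (th 3) * detL a b <= dev th u * IZR (v 0%nat) <= 2 * detL a b.
Proof.
  intros Hu Hv.
  set (D := (m1 * n2 - m2 * n1)%Z).
  pose proof (zvec_comb a b u m1 n1 Hu) as Ru; pose proof (zvec_comb a b v m2 n2 Hv) as Rv.
  assert (Hminor : forall j, (1 <= j <= 3)%nat ->
            minor (zvec u) (zvec v) 0 j = IZR D * minor (zvec a) (zvec b) 0 j).
  { intros j Hj; unfold D; rewrite minus_IZR, !mult_IZR.
    apply minor_comb; [apply Ru | apply Ru | apply Rv | apply Rv]; lia. }
  assert (HD : D <> 0%Z).
  { intro E.
    assert (dev th u * IZR (v 0%nat) <= 2 * 0).
    { apply dev_mul_le_minor; intros j Hj.
      rewrite Hminor, E, Rmult_0_l, Rabs_R0 by exact Hj; lra. }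
    pose proof dev_pos; assert (0 < IZR (v 0%nat)) by (apply IZR_lt; lia); nra. }
  assert (RD : Rabs (IZR D) = 1)
    by (rewrite Rabs_Zabs; unfold D; rewrite (coords_det_unit a b m1 n1 m2 n2); auto).
  split.
  - change (detL a b) with (sqrt (gram (zvec a) (zvec b))).
    replace (gram (zvec a) (zvec b)) with (gram (zvec u) (zvec v)); [apply sqrt_gram_le|].
    rewrite (gram_comb _ _ _ _ _ _ _ _ Ru Rv), <- !mult_IZR, <- minus_IZR; fold D.
    rewrite <- pow2_abs, RD; ring.
  - apply dev_mul_le_minor; intros j Hj.
    rewrite Hminor, Rabs_mult, RD, Rmult_1_l by exact Hj.
    apply minor_le_sqrt_gram; exact Hj.
Qed.

End ConsecutiveVectors.

Lemma dnint_le_dist r n : dnint r <= Rabs (r - IZR n).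
Proof.
  unfold dnint, frac_part. destruct (base_Int_part r) as [H1 H2].
  destruct (Z_le_gt_dec n (Int_part r)) as [Hn|Hn].
  - apply IZR_le in Hn. eapply Rle_trans; [apply Rmin_l|].
    rewrite Rabs_pos_eq; lra.
  - assert (Hn' : (Int_part r + 1 <= n)%Z) by lia.
    apply IZR_le in Hn'; rewrite plus_IZR in Hn'.
    eapply Rle_trans; [apply Rmin_r|].
    rewrite Rabs_left1; lra.
Qed.

Lemma dnint_le_half r : dnint r <= / 2.
Proof. unfold dnint; destruct (base_fp r); unfold Rmin; destruct Rle_dec; lra. Qed.

Lemma strict_mono_le (x : nat -> Z) :
  (forall l, x l < x (S l))%Z -> forall p q, (p <= q)%nat <-> (x p <= x q)%Z.
Proof.
  intros Hx p q; split.
  - induction 1; [lia|]. specialize (Hx m); lia.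
  - intro Hpq. destruct (Nat.le_gt_cases p q) as [|Hqp]; [assumption|exfalso].
    assert (H : (x (S q) <= x p)%Z).
    { clear Hpq; induction Hqp; [lia|]. specialize (Hx m); lia. }
    specialize (Hx q); lia.
Qed.

Lemma Z_argmin (f : Z -> R) (N : Z) :
  (1 <= N)%Z -> exists m, (1 <= m <= N)%Z /\ forall x', (1 <= x' <= N)%Z -> f m <= f x'.
Proof.
  revert N; apply Z.le_ind.
  - intros ? ? ->; reflexivity.
  - exists 1%Z; split; [lia|]. intros x' Hx; replace x' with 1%Z by lia; lra.
  - intros N HN [m [Hm Hf]].
    destruct (Rle_dec (f m) (f (Z.succ N))).
    + exists m; split; [lia|]. intros x' Hx.
      destruct (Z.eq_dec x' (Z.succ N)) as [->|]; [assumption | apply Hf; lia].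
    + exists (Z.succ N); split; [lia|]. intros x' Hx.
      destruct (Z.eq_dec x' (Z.succ N)) as [->|]; [lra|].
      specialize (Hf x' ltac:(lia)); lra.
Qed.

Definition theta3 (th1 th2 th3 : R) (j : nat) : R :=
  match j with 1%nat => th1 | 2%nat => th2 | _ => th3 end.

Definition bav (x y1 y2 y3 : nat -> Z) (l : nat) (i : nat) : Z :=
  match i with 0%nat => x l | 1%nat => y1 l | 2%nat => y2 l | _ => y3 l end.

Lemma zeta_le_dev th1 th2 th3 (w : nat -> Z) :
  zeta th1 th2 th3 (w 0%nat) <= dev (theta3 th1 th2 th3) w.
Proof.
  unfold zeta; repeat apply Rmax_lub;
    [ apply Rle_trans with (Rabs (err (theta3 th1 th2 th3) w 1))
    | apply Rle_trans with (Rabs (err (theta3 th1 th2 th3) w 2))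
    | apply Rle_trans with (Rabs (err (theta3 th1 th2 th3) w 3)) ];
    solve [apply dnint_le_dist | apply dev_ge; lia].
Qed.

Section BestApproximations.

Variables th1 th2 th3 : R.
Hypothesis Hind : Z_independent (theta3 th1 th2 th3).
Variable x : nat -> Z.
Hypothesis Hx_incr : forall l, (x l < x (S l))%Z.
Hypothesis Hx_best : forall n : Z, is_best th1 th2 th3 n <-> exists l, x l = n.
Variables y1 y2 y3 : nat -> Z.
Hypothesis Hy1 : forall l, Rabs (th1 * IZR (x l) - IZR (y1 l)) = dnint (th1 * IZR (x l)).
Hypothesis Hy2 : forall l, Rabs (th2 * IZR (x l) - IZR (y2 l)) = dnint (th2 * IZR (x l)).
Hypothesis Hy3 : forall l, Rabs (th3 * IZR (x l) - IZR (y3 l)) = dnint (th3 * IZR (x l)).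

Lemma best_x l : is_best th1 th2 th3 (x l).
Proof. apply Hx_best; exists l; reflexivity. Qed.

Lemma dev_bav l : dev (theta3 th1 th2 th3) (bav x y1 y2 y3 l) = zeta th1 th2 th3 (x l).
Proof. unfold dev, err, zeta; cbn [theta3 bav]; rewrite Hy1, Hy2, Hy3; reflexivity. Qed.

Lemma zeta_gap l x' : (0 < x' < x (S l))%Z -> zeta th1 th2 th3 (x l) <= zeta th1 th2 th3 x'.
Proof.
  intro Hx'.
  destruct (Z_argmin (zeta th1 th2 th3) x' ltac:(lia)) as [m [Hm Hmin]].
  destruct (proj1 (Hx_best m)) as [p Hp].
  { split; [lia | intros; apply Hmin; lia]. }
  assert (Hpl : (p <= l)%nat).
  { apply Nat.lt_succ_r, Nat.nle_gt; intro Hle.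
    apply (strict_mono_le x Hx_incr) in Hle; lia. }
  apply (strict_mono_le x Hx_incr) in Hpl.
  apply Rle_trans with (zeta th1 th2 th3 m); [|apply Hmin; lia].
  apply (proj2 (best_x l)); destruct (best_x p); lia.
Qed.

Lemma zeta_x_decreasing l : zeta th1 th2 th3 (x (S l)) < zeta th1 th2 th3 (x l).
Proof.
  destruct (best_x l) as [Hl0 _]; pose proof (Hx_incr l).
  assert (Hle : zeta th1 th2 th3 (x (S l)) <= zeta th1 th2 th3 (x l))
    by (apply (proj2 (best_x (S l))); lia).
  assert (Hne : zeta th1 th2 th3 (x l) <> zeta th1 th2 th3 (x (S l)))
    by (rewrite <- !dev_bav; apply dev_neq; [exact Hind | cbn [bav]; lia]).
  destruct (Rle_lt_or_eq_dec _ _ Hle); [assumption | congruence].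
Qed.

Theorem best_vectors_bounds (a b : nat -> Z) l (m1 n1 m2 n2 : Z) :
  (forall i, (i < 4)%nat -> bav x y1 y2 y3 l i = m1 * a i + n1 * b i)%Z ->
  (forall i, (i < 4)%nat -> bav x y1 y2 y3 (S l) i = m2 * a i + n2 * b i)%Z ->
  C1_const th1 th2 th3 * detL a b <= zeta th1 th2 th3 (x l) * IZR (x (S l)) <= 2 * detL a b.
Proof.
  intros Hu Hv. rewrite <- dev_bav.
  destruct (best_x l) as [Hl0 _].
  apply (consecutive_bounds (theta3 th1 th2 th3) _ (bav x y1 y2 y3 (S l))) with m1 n1 m2 n2;
    auto; cbn [bav].
  - apply Hx_incr.
  - rewrite !dev_bav; apply zeta_x_decreasing.
  - rewrite dev_bav; unfold zeta; repeat apply Rmax_lub; apply dnint_le_half.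
  - intros w Hw. rewrite dev_bav.
    eapply Rle_trans; [apply zeta_gap; exact Hw | apply zeta_le_dev].
Qed.

End BestApproximations.

Theorem lemma1 (th1 th2 th3 : R)
  (Hind : forall a0 a1 a2 a3 : Z,
      IZR a0 + IZR a1 * th1 + IZR a2 * th2 + IZR a3 * th3 = 0 ->
      a0 = 0%Z /\ a1 = 0%Z /\ a2 = 0%Z /\ a3 = 0%Z)
  (x : nat -> Z)
  (Hx_incr : forall l, (x l < x (S l))%Z)
  (Hx_best : forall n : Z, is_best th1 th2 th3 n <-> exists l, x l = n)
  (y1 y2 y3 : nat -> Z)
  (Hy1 : forall l, Rabs (th1 * IZR (x l) - IZR (y1 l)) = dnint (th1 * IZR (x l)))
  (Hy2 : forall l, Rabs (th2 * IZR (x l) - IZR (y2 l)) = dnint (th2 * IZR (x l)))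
  (Hy3 : forall l, Rabs (th3 * IZR (x l) - IZR (y3 l)) = dnint (th3 * IZR (x l)))
  (nu k : nat) (Hnuk : (nu < k)%nat)
  (p1 p2 : nat -> R) (Hp : lin_indep2 p1 p2)
  (Hpi : forall l, (nu <= l <= k)%nat ->
      in_span p1 p2 (fun i => match i with
                              | 0%nat => IZR (x l)
                              | 1%nat => IZR (y1 l)
                              | 2%nat => IZR (y2 l)
                              | _ => IZR (y3 l) end))
  (a b : nat -> Z)
  (HLambda : forall z : nat -> Z,
      in_span p1 p2 (zvec z) <->
      exists m n : Z, forall i, (i < 4)%nat -> z i = (m * a i + n * b i)%Z) :
  (forall l, (nu <= l)%nat -> (l < k)%nat ->
      C1_const th1 th2 th3 * detL a b <= zeta th1 th2 th3 (x l) * IZR (x (S l)) <= 2 * detL a b)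
  /\ detL a b >= / 2 * Rmin (zeta th1 th2 th3 (x nu) * IZR (x (S nu)))
                             (zeta th1 th2 th3 (x (k - 1)%nat) * IZR (x k)).
Proof.
  (* The plane enters only through [HLambda]. *)
  assert (Hcoords : forall l, (nu <= l <= k)%nat -> exists m n : Z,
             forall i, (i < 4)%nat -> bav x y1 y2 y3 l i = (m * a i + n * b i)%Z).
  { intros l Hl; apply HLambda.
    destruct (Hpi l Hl) as [c [d Hcd]]; exists c, d; intros i Hi.
    rewrite <- Hcd by exact Hi; destruct i as [|[|[|]]]; reflexivity. }
  assert (Hbounds : forall l, (nu <= l)%nat -> (l < k)%nat ->
      C1_const th1 th2 th3 * detL a b <= zeta th1 th2 th3 (x l) * IZR (x (S l)) <= 2 * detL a b).
  { intros l Hl1 Hl2.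
    destruct (Hcoords l ltac:(lia)) as [m1 [n1 Hu]], (Hcoords (S l) ltac:(lia)) as [m2 [n2 Hv]].
    exact (best_vectors_bounds th1 th2 th3 Hind x Hx_incr Hx_best y1 y2 y3 Hy1 Hy2 Hy3
             a b l m1 n1 m2 n2 Hu Hv). }
  split; [exact Hbounds|].
  destruct (Hbounds nu ltac:(lia) Hnuk) as [_ Hfirst].
  pose proof (Rmin_l (zeta th1 th2 th3 (x nu) * IZR (x (S nu)))
                     (zeta th1 th2 th3 (x (k - 1)%nat) * IZR (x k))).
  lra.
Qed.
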